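(* Let $M$ be a finite-horizon reward-free MDP, $\Pi\subseteq\Pi_{\mathrm{RNS}}$, and $h\in[H]$. For all $\varepsilon>0$, $\mathsf{Cov}^M_{h,\varepsilon}\le C^M_{\infty;h}$.
   Context: Episodic reward-free MDP $M$ with countable state space $\mathcal{X}$, action space $\mathcal{A}$, horizon $H$; $\Pi_{\mathrm{RNS}}$ is the set of randomized non-stationary policies $\pi=(\pi_h)_{h\le H}$, $\pi_h:\mathcal{X}\to\Delta(\mathcal{A})$. $d^{M,\pi}_h(x,a)$ is the probability that $(x_h,a_h)=(x,a)$ when running $\pi$ in $M$; for $p\in\Delta(\Pi_{\mathrm{RNS}})$, $d^{M,p}_h=\mathbb{E}_{\pi\sim p}d^{M,\pi}_h$. Define $\Psi^M_{h,\varepsilon}(p)=\sup_{\pi\in\Pi}\mathbb{E}^{M,\pi}\big[\frac{d^{M,\pi}_h(x_h,a_h)}{d^{M,p}_h(x_h,a_h)+\varepsilon d^{M,\pi}_h(x_h,a_h)}\big]$, the $L_1$-Coverability $\mathsf{Cov}^M_{h,\varepsilon}=\inf_{p\in\Delta(\Pi)}\Psi^M_{h,\varepsilon}(p)$, and the $L_\infty$-Coverability $C^M_{\infty;h}=\inf_{\mu\in\Delta(\mathcal{X}\times\mathcal{A})}\sup_{\pi\in\Pi}\sup_{(x,a)}\frac{d^{M,\pi}_h(x,a)}{\mu(x,a)}$. *)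

From HB Require Import structures.
From mathcomp Require Import all_boot all_order all_algebra.
From mathcomp Require Import all_classical all_reals all_analysis.
Import Order.TTheory GRing.Theory Num.Theory.

Set Implicit Arguments.
Unset Strict Implicit.
Unset Printing Implicit Defensive.

Local Open Scope classical_set_scope.
Local Open Scope ring_scope.

Section RL.
Variable R : realType.

Definition is_dist (T : choiceType) (f : T -> R) : Prop :=
  (forall t, 0 <= f t) /\ (\esum_(t in [set: T]) (f t)%:E = 1)%E.

(* Reward-free episodic MDP with countable state space X and countable action
   space A: initial distribution, and layer-dependent transition kernels
   (trans h x a is the law of x_{h+1} given (x_h,a_h) = (x,a), layers 1-indexed). *)
Record MDP (X A : countType) := {
  init : X -> R;
  trans : nat -> X -> A -> X -> R;
  init_dist : is_dist init;
  trans_dist : forall h x a, is_dist (trans h x a) }.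

(* randomized non-stationary policies: pi h x is the law of a_h given x_h = x *)
Definition policy (X A : countType) := nat -> X -> A -> R.

Definition is_RNS_policy (X A : countType) (H : nat) (pi : policy X A) : Prop :=
  forall h x, (1 <= h <= H)%N -> is_dist (pi h x).

(* occ M pi k x a = probability that (x_{k+1}, a_{k+1}) = (x, a) *)
Fixpoint occ (X A : countType) (M : MDP X A) (pi : policy X A) (k : nat)
  : X -> A -> R :=
  match k with
  | 0 => fun x a => init M x * pi 1%N x a
  | k'.+1 => fun x' a' =>
      fine (\esum_(z in [set: X * A]) ((occ M pi k' z.1 z.2)%:E
                                        * (trans M k'.+1 z.1 z.2 x')%:E))%E
      * pi k'.+2 x' a'
  end.

Definition occupancy (X A : countType) (M : MDP X A) (pi : policy X A)
  (h : nat) (x : X) (a : A) : R := occ M pi h.-1 x a.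

(* a (discrete) distribution p in Delta(Pi): weights w n on policies q n in Pi *)
Definition is_mixture (X A : countType) (Pi : set (policy X A))
  (w : nat -> R) (q : nat -> policy X A) : Prop :=
  (forall n, 0 <= w n) /\ (\esum_(n in [set: nat]) (w n)%:E = 1)%E
  /\ (forall n, Pi (q n)).

Definition mix_occupancy (X A : countType) (M : MDP X A)
  (w : nat -> R) (q : nat -> policy X A) (h : nat) (x : X) (a : A) : R :=
  fine (\esum_(n in [set: nat]) ((w n)%:E * (occupancy M (q n) h x a)%:E))%E.

Definition occ_expect (X A : countType) (M : MDP X A) (pi : policy X A)
  (h : nat) (f : X -> A -> R) : \bar R :=
  (\esum_(z in [set: X * A]) (occupancy M pi h z.1 z.2 * f z.1 z.2)%:E)%E.

Definition Psi (X A : countType) (M : MDP X A) (Pi : set (policy X A))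
  (h : nat) (eps : R) (w : nat -> R) (q : nat -> policy X A) : \bar R :=
  ereal_sup [set y | exists pi, Pi pi /\
     y = occ_expect M pi h (fun x a =>
           occupancy M pi h x a /
           (mix_occupancy M w q h x a + eps * occupancy M pi h x a))].

Definition Cov (X A : countType) (M : MDP X A) (Pi : set (policy X A))
  (h : nat) (eps : R) : \bar R :=
  ereal_inf [set y | exists w q, is_mixture Pi w q /\ y = Psi M Pi h eps w q].

Definition eratio (d mu : R) : \bar R :=
  if mu == 0 then (if d == 0 then 0%E else +oo%E) else (d / mu)%:E.

Definition Cinf (X A : countType) (M : MDP X A) (Pi : set (policy X A))
  (h : nat) : \bar R :=
  ereal_inf [set y | exists mu : X * A -> R, is_dist mu /\
     y = ereal_sup [set r | exists pi, Pi pi /\ exists z : X * A,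
                        r = eratio (occupancy M pi h z.1 z.2) (mu z)]].

End RL.

(* Fix a distribution mu on state-action pairs with d^pi_h <= C mu for every pi in Pi.
   Since Pi may be infinite, mu need not be realised by any mixture of policies.
   Instead consider the concave potential
     Phi(p) = sum_z mu(z) ln (1 + d^p(z) / (eta mu(z))),
   which is at most ln (1 + C / eta) on mixtures, and take a mixture p maximising
   Phi up to gam.  Moving p a step t towards any pi in Pi cannot raise Phi by more
   than gam, so by concavity of ln
     sum_z mu(z) (d^pi(z) - d^p(z)) / (t d^pi(z) + (1 - t) d^p(z) + eta mu(z)) <= gam / t.
   Together with d^pi <= C mu, a pointwise inequality turns this into
     E^pi [d^pi / (d^p + eps d^pi)] <= C (1 + t) / (1 - t) + O(gam / t + eta / (t eps^2)),
   and letting t, gam / t and eta / t go to 0 gives Cov <= C. *)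

From mathcomp Require Import all_boot all_order all_algebra.
From mathcomp Require Import all_classical all_reals all_analysis.
From mathcomp Require Import finmap ring lra.
Import Order.TTheory GRing.Theory Num.Theory.
Local Open Scope classical_set_scope.
Local Open Scope ring_scope.

Set Implicit Arguments.
Unset Strict Implicit.

Section finite_partial_sums.
Variables (R : realType) (T : choiceType).
Implicit Types (f : T -> R) (A B : set T).

Lemma fsum_le_esum f A : finite_set A -> (forall t, 0 <= f t) ->
  ((\sum_(t <- fset_set A) f t)%:E <= \esum_(t in [set: T]) (f t)%:E)%E.
Proof.
move=> finA f_ge0; apply: esum_ge; exists A; first by split.
by rewrite fsumEFin // fsbig_finite.
Qed.

Lemma ler_fsum_subset f A B : finite_set B -> A `<=` B -> (forall t, 0 <= f t) ->
  \sum_(t <- fset_set A) f t <= \sum_(t <- fset_set B) f t.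
Proof.
move=> finB AB f_ge0; have finA := sub_finite_set AB finB.
rewrite -lee_fin -!fsbig_finite // -!fsumEFin //.
apply: lee_fsum_nneg_subset => //; first exact/subsetP.
by move=> t _; rewrite lee_fin.
Qed.

Lemma esum_le_eventually f (K : R) A0 : finite_set A0 -> (forall t, 0 <= f t) ->
  (forall B, finite_set B -> A0 `<=` B -> \sum_(t <- fset_set B) f t <= K) ->
  (\esum_(t in [set: T]) (f t)%:E <= K%:E)%E.
Proof.
move=> finA0 f_ge0 sum_le; apply: ge_ereal_sup => _ [A [finA _] <-].
rewrite fsumEFin // fsbig_finite // lee_fin.
have finAA0 : finite_set (A `|` A0) by rewrite finite_setU.
apply: le_trans (sum_le _ finAA0 (@subsetUr _ _ _)).
exact: ler_fsum_subset (@subsetUl _ _ _) f_ge0.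
Qed.

Lemma esum_fsum_approx f (s gam : R) : (forall t, 0 <= f t) ->
  (\esum_(t in [set: T]) (f t)%:E)%E = s%:E -> 0 < gam ->
  exists2 A0, finite_set A0 &
    forall B, finite_set B -> A0 `<=` B -> s - gam < \sum_(t <- fset_set B) f t.
Proof.
move=> f_ge0 sumf gam_gt0.
have : ((s - gam)%:E < \esum_(t in [set: T]) (f t)%:E)%E.
  by rewrite sumf lte_fin; lra.
move=> /ereal_sup_gt [_ [A0 [finA0 _] <-]].
rewrite fsumEFin // fsbig_finite // lte_fin => lt_sum.
exists A0 => // B finB A0B.
by rewrite (lt_le_trans lt_sum) // ler_fsum_subset.
Qed.

End finite_partial_sums.

Section distributions.
Variables (R : realType) (T : choiceType) (f : T -> R).
Hypothesis f_dist : is_dist f.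

Lemma dist_fsum_le1 B : finite_set B -> \sum_(t <- fset_set B) f t <= 1.
Proof. by move=> finB; rewrite -lee_fin -f_dist.2; exact: fsum_le_esum f_dist.1. Qed.

Lemma dist_neq0 : exists t, f t != 0.
Proof.
apply: contrapT => /forallNP f_eq0; have := f_dist.2.
rewrite esum1 => [[] /eqP|t _]; first by rewrite eq_sym oner_eq0.
by have /negP/negPn/eqP -> := f_eq0 t.
Qed.

Lemma dist_esum_mulr_le (g : T -> R) (c : R) : (forall t, 0 <= g t <= c) ->
  (\esum_(t in [set: T]) (f t * g t)%:E <= c%:E)%E.
Proof.
move=> g_bnd; have [f_ge0 _] := f_dist.
have c_ge0 : 0 <= c.
  by have [t _] := dist_neq0; case/andP: (g_bnd t); exact: le_trans.
apply: (esum_le_eventually (A0 := set0)) => // [t|B finB _].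
  by case/andP: (g_bnd t) => g_ge0 _; rewrite mulr_ge0.
apply: (le_trans (y := \sum_(t <- fset_set B) f t * c)).
  by apply: ler_sum => t _; rewrite ler_wpM2l //; case/andP: (g_bnd t).
by rewrite -mulr_suml ler_piMl ?dist_fsum_le1.
Qed.

End distributions.

Lemma esum_nat_recl (R : realType) (g : nat -> \bar R) : (forall n, (0 <= g n)%E) ->
  \esum_(n in [set: nat]) g n = (g 0%N + \esum_(n in [set: nat]) g n.+1)%E.
Proof.
move=> g_ge0; rewrite -!nneseries_esumT //.
rewrite (@nneseries_recl _ predT) //; congr (_ + _)%E.
by rewrite -(nneseries_addn 1) //; apply: eq_eseriesr => k _; rewrite addn1.
Qed.

Lemma esum_natZl (R : realType) (x : R) (g : nat -> \bar R) : 0 <= x ->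
  (forall n, (0 <= g n)%E) ->
  \esum_(n in [set: nat]) (x%:E * g n)%E = (x%:E * \esum_(n in [set: nat]) g n)%E.
Proof.
move=> x_ge0 g_ge0; rewrite -!nneseries_esumT //; last by move=> n; rewrite mule_ge0.
by rewrite nneseriesZl.
Qed.

Section real_inequalities.
Variable R : realType.
Implicit Types a b m x y C t eps eta s delta : R.

Lemma divB_le_lnB x y : 0 < x -> 0 < y -> (y - x) / y <= ln y - ln x.
Proof.
move=> x_gt0 y_gt0; have xy_gt0 : 0 < x / y by exact: divr_gt0.
have := @le_ln1Dx R (x / y - 1); rewrite addrCA subrr addr0 ln_div ?posrE //.
have -> : (y - x) / y = 1 - x / y by field; exact: lt0r_neq0.
by move=> /(_ _); lra.
Qed.

Definition potential eta m x := m * ln (1 + x / (eta * m)).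

Lemma potential_ge0 eta m x : 0 <= eta -> 0 <= m -> 0 <= x -> 0 <= potential eta m x.
Proof.
move=> eta_ge0 m_ge0 x_ge0; apply: mulr_ge0 => //; apply: ln_ge0.
by rewrite lerDl divr_ge0 // mulr_ge0.
Qed.

Lemma potential_le eta m x C : 0 < eta -> 0 <= m -> 0 <= x <= C * m ->
  potential eta m x <= m * ln (1 + C / eta).
Proof.
move=> eta_gt0 m_ge0 /andP[x_ge0 x_le]; rewrite /potential.
have [->|m_neq0] := eqVneq m 0; first by rewrite !mul0r.
have m_gt0 : 0 < m by rewrite lt_def m_neq0.
have etam_gt0 : 0 < eta * m by exact: mulr_gt0.
have C_ge0 : 0 <= C by rewrite -(pmulr_lge0 _ m_gt0) (le_trans x_ge0).
rewrite ler_wpM2l // ler_ln ?posrE; first last.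
- by rewrite ltr_pwDl // divr_ge0 // ltW.
- by rewrite ltr_pwDl // divr_ge0 // ltW.
rewrite lerD2l ler_pdivrMr //.
by rewrite (_ : C / eta * (eta * m) = C * m) //; field; exact: lt0r_neq0.
Qed.

Lemma potential_increment eta m x y : 0 < eta -> 0 <= m -> 0 <= x -> 0 <= y ->
  m * ((y - x) / (y + eta * m)) <= potential eta m y - potential eta m x.
Proof.
move=> eta_gt0 m_ge0 x_ge0 y_ge0; rewrite /potential -mulrBr.
have [->|m_neq0] := eqVneq m 0; first by rewrite !mul0r.
have etam_gt0 : 0 < eta * m by rewrite mulr_gt0 // lt_def m_neq0.
rewrite ler_wpM2l //.
have -> : (y - x) / (y + eta * m) =
    ((1 + y / (eta * m)) - (1 + x / (eta * m))) / (1 + y / (eta * m)).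
  by field; rewrite m_neq0 gt_eqF //= gt_eqF // ltr_pwDl.
by apply: divB_le_lnB; rewrite ltr_pwDl // divr_ge0 // ltW.
Qed.

Lemma sq_ratio_le a b m C t eps eta :
  0 <= a <= C * m -> 0 <= b -> 0 <= m -> 0 <= C ->
  0 < t -> t <= eps -> t < 1 -> 0 < eta ->
  a * (a / (b + eps * a)) <=
  C * (1 + t) * (m * (a / (t * a + (1 - t) * b + eta * m)))
  + eta * m / (t * eps ^+ 2).
Proof.
move=> /andP[a_ge0 a_le] b_ge0 m_ge0 C_ge0 t_gt0 t_le t_lt1 eta_gt0.
have eps_gt0 : 0 < eps by exact: lt_le_trans t_le.
set D := t * a + (1 - t) * b + eta * m.
have ta_ge0 : 0 <= t * a by rewrite mulr_ge0 // ltW.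
have tb_ge0 : 0 <= (1 - t) * b by rewrite mulr_ge0 //; lra.
have etam_ge0 : 0 <= eta * m by rewrite mulr_ge0 // ltW.
have D_ge0 : 0 <= D by rewrite /D; lra.
have rem_ge0 : 0 <= eta * m / (t * eps ^+ 2).
  by rewrite divr_ge0 // mulr_ge0 ?exprn_ge0 // ltW.
have [->|a_neq0] := eqVneq a 0.
  by rewrite !(mul0r, mulr0) add0r.
have a_gt0 : 0 < a by rewrite lt_def a_neq0.
have B_gt0 : 0 < b + eps * a by rewrite ltr_pwDr // mulr_gt0.
(* Either the mixed denominator is at most (1 + t) (b + eps a), or a^2 / (b + eps a)
   <= a / eps is absorbed by the last term. *)
have [small|large] := leP (eta * m) (t * (b + eps * a)).
- have D_gt0 : 0 < D by rewrite /D; have := mulr_gt0 t_gt0 a_gt0; lra.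
  have D_le : D <= (1 + t) * (b + eps * a).
    have : t * a <= eps * a by rewrite ler_wpM2r // ltW.
    rewrite /D; nra.
  have aa_le : a * a <= C * m * a by rewrite ler_wpM2r.
  have Cma_ge0 : 0 <= C * m * a by rewrite !mulr_ge0.
  apply: ler_wpDr rem_ge0 _.
  rewrite mulrA ler_pdivrMr //.
  have -> : C * (1 + t) * (m * (a / D)) * (b + eps * a) =
            C * m * a * ((1 + t) * (b + eps * a) / D) by ring.
  by apply: le_trans aa_le _; rewrite ler_peMr // ler_pdivlMr // mul1r.
- apply: ler_wpDl; first by rewrite !mulr_ge0 ?invr_ge0 //; lra.
  have ratio_le : a / (b + eps * a) <= eps^-1.
    rewrite ler_pdivrMr // mulrDr mulKf ?gt_eqF // ler_wpDl //.
    by rewrite mulr_ge0 // invr_ge0 ltW.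
  apply: le_trans (ler_wpM2l a_ge0 ratio_le) _.
  have -> : a * eps^-1 = t * (eps * a) / (t * eps ^+ 2).
    by field; rewrite !gt_eqF.
  rewrite ler_wpM2r ?invr_ge0 ?mulr_ge0 ?exprn_ge0 ?ltW //.
  apply: le_lt_trans large; apply: ler_wpM2l; [exact: ltW | lra].
Qed.

Lemma sq_ratio_le_slope a b m C t eps eta :
  0 <= a <= C * m -> 0 <= b -> 0 <= m -> 0 <= C ->
  0 < t -> t <= eps -> t < 1 -> 0 < eta ->
  a * (a / (b + eps * a)) <=
  C * (1 + t) * (m * ((a - b) / (t * a + (1 - t) * b + eta * m)))
  + (C * (1 + t) / (1 - t) + eta / (t * eps ^+ 2)) * m.
Proof.
move=> a_bnd b_ge0 m_ge0 C_ge0 t_gt0 t_le t_lt1 eta_gt0.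
apply: (le_trans (sq_ratio_le a_bnd b_ge0 m_ge0 C_ge0 t_gt0 t_le t_lt1 eta_gt0)).
set D := t * a + (1 - t) * b + eta * m.
have mix_le : m * (b / D) <= m / (1 - t).
  have [->|m_neq0] := eqVneq m 0; first by rewrite !mul0r.
  have m_gt0 : 0 < m by rewrite lt_def m_neq0.
  have etam_gt0 : 0 < eta * m by rewrite mulr_gt0.
  have ta_ge0 : 0 <= t * a by case/andP: a_bnd => a_ge0 _; rewrite mulr_ge0 // ltW.
  have tb_ge0 : 0 <= (1 - t) * b by rewrite mulr_ge0 //; lra.
  rewrite ler_pM2l // ler_pdivrMr /D; last lra.
  by rewrite mulrC ler_pdivlMr; lra.
have Ct_ge0 : 0 <= C * (1 + t) by rewrite mulr_ge0 //; lra.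
have := ler_wpM2l Ct_ge0 mix_le.
have -> : m * (a / D) = m * ((a - b) / D) + m * (b / D) by ring.
have -> : (C * (1 + t) / (1 - t) + eta / (t * eps ^+ 2)) * m =
          C * (1 + t) * (m / (1 - t)) + eta * m / (t * eps ^+ 2) by ring.
lra.
Qed.

Lemma perturbation_le C t s delta :
  0 <= C -> 0 < t -> t <= 1 / 2 -> 8 * (C + 1) * t <= delta ->
  0 <= s -> 6 * (C + 1) * s <= delta ->
  C * (1 + t) / (1 - t) + (2 * C * (1 + t) + 1) * s <= C + delta.
Proof.
move=> C_ge0 t_gt0 t_le t_small s_ge0 s_small.
have delta_ge0 : 0 <= delta by apply: le_trans t_small; rewrite mulr_ge0 //; lra.
have : C * (1 + t) / (1 - t) <= C + delta / 2.
  rewrite ler_pdivrMr; last lra.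
  have : 0 <= (1 / 2 - t) * delta by rewrite mulr_ge0 //; lra.
  nra.
have : (2 * C * (1 + t) + 1) * s <= delta / 2.
  have : 0 <= (1 / 2 - t) * C * s by rewrite !mulr_ge0 //; lra.
  nra.
lra.
Qed.

End real_inequalities.

Section eratio.
Variable R : realType.
Implicit Types d m C : R.

Lemma eratio_ge0 d m : 0 <= d -> 0 <= m -> (0 <= eratio d m)%E.
Proof.
move=> d_ge0 m_ge0; rewrite /eratio.
have [_|_] := eqVneq m 0; last by rewrite lee_fin divr_ge0.
by have [_|_] := eqVneq d 0; rewrite ?leey.
Qed.

Lemma eratio_le d m C : 0 <= m -> (eratio d m <= C%:E)%E -> d <= C * m.
Proof.
rewrite /eratio => m_ge0; have [->|m_neq0] := eqVneq m 0.
  by have [->|_] := eqVneq d 0; rewrite ?mulr0 // leNgt ltey.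
have m_gt0 : 0 < m by rewrite lt_def m_neq0.
by rewrite lee_fin ler_pdivrMr // mulrC.
Qed.

End eratio.

Lemma occ_ge0 (R : realType) (X A : countType) (H : nat) (M : MDP R X A)
    (pi : policy R X A) k x a :
  is_RNS_policy H pi -> (k < H)%N -> 0 <= occ M pi k x a.
Proof.
move=> pi_RNS; elim: k x a => [|k IHk] x a k_lt /=.
  by rewrite mulr_ge0 ?(init_dist M).1 // (pi_RNS 1%N x _).1 //
    leqnn (leq_ltn_trans _ k_lt).
rewrite mulr_ge0 ?(pi_RNS k.+2 x _).1 //.
apply: fine_ge0; apply: esum_ge0 => z _.
by rewrite mule_ge0 // lee_fin ?IHk ?(ltnW k_lt) // (trans_dist M _ _ _).1.
Qed.

Section mixtures.
Variables (R : realType) (X A : countType) (M : MDP R X A).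
Variable Pi : set (policy R X A).
Implicit Types (w : nat -> R) (q : nat -> policy R X A) (pi : policy R X A).

Lemma mixture_dist w q : is_mixture Pi w q -> is_dist w.
Proof. by case=> w_ge0 [w_sum _]. Qed.

Lemma is_mixture_point pi : Pi pi ->
  is_mixture Pi (fun n => (n == 0)%:R) (fun=> pi).
Proof.
move=> Ppi; split; first by case.
split => //; rewrite esum_nat_recl; last by case.
by rewrite esum1 ?adde0.
Qed.

Definition cons_weight (t : R) w n := if n is k.+1 then (1 - t) * w k else t.

Definition cons_policy pi q n := if n is k.+1 then q k else pi.

Lemma is_mixture_cons w q pi t : is_mixture Pi w q -> Pi pi -> 0 <= t <= 1 ->
  is_mixture Pi (cons_weight t w) (cons_policy pi q).
Proof.
move=> [w_ge0 [w_sum qPi]] Ppi /andP[t_ge0 t_le1].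
have t'_ge0 : 0 <= 1 - t by rewrite subr_ge0.
split; first by case=> [|n] //=; rewrite mulr_ge0.
split; last by case.
rewrite esum_nat_recl; last by case=> [|n]; rewrite lee_fin //= mulr_ge0.
under eq_esum do rewrite EFinM.
by rewrite esum_natZl // w_sum mule1 -EFinD subrKC.
Qed.

Variables (h : nat) (mu : X * A -> R) (C : R).
Hypothesis dominated :
  forall pi, Pi pi -> forall z, 0 <= occupancy M pi h z.1 z.2 <= C * mu z.

Lemma esum_weighted_occupancy_bound w q z : is_mixture Pi w q ->
  (0 <= \esum_(n in [set: nat]) (w n * occupancy M (q n) h z.1 z.2)%:E
     <= (C * mu z)%:E)%E.
Proof.
move=> w_mix; have [w_ge0 [_ qPi]] := w_mix; apply/andP; split.
  apply: esum_ge0 => n _; case/andP: (dominated (qPi n) z) => d_ge0 _.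
  by rewrite lee_fin mulr_ge0.
by apply: (dist_esum_mulr_le (mixture_dist w_mix)) => n; exact: dominated.
Qed.

Lemma mix_occupancyE w q z : is_mixture Pi w q ->
  (\esum_(n in [set: nat]) ((w n)%:E * (occupancy M (q n) h z.1 z.2)%:E))%E
  = (mix_occupancy M w q h z.1 z.2)%:E.
Proof.
move=> w_mix; rewrite /mix_occupancy; under eq_esum do rewrite -EFinM.
have /andP[sum_ge0 sum_le] := esum_weighted_occupancy_bound z w_mix.
by rewrite fineK // ge0_fin_numE // (le_lt_trans sum_le) ?ltry.
Qed.

Lemma mix_occupancy_bound w q z : is_mixture Pi w q ->
  0 <= mix_occupancy M w q h z.1 z.2 <= C * mu z.
Proof.
move=> w_mix; rewrite -2!lee_fin -mix_occupancyE //.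
under eq_esum do rewrite -EFinM.
exact: esum_weighted_occupancy_bound.
Qed.

Lemma mix_occupancy_cons w q pi t z : is_mixture Pi w q -> Pi pi -> 0 <= t <= 1 ->
  mix_occupancy M (cons_weight t w) (cons_policy pi q) h z.1 z.2
  = t * occupancy M pi h z.1 z.2 + (1 - t) * mix_occupancy M w q h z.1 z.2.
Proof.
move=> w_mix Ppi t01; have [w_ge0 [_ qPi]] := w_mix.
have /andP[t_ge0 t_le1] := t01; have t'_ge0 : 0 <= 1 - t by rewrite subr_ge0.
have d_ge0 pi' : Pi pi' -> 0 <= occupancy M pi' h z.1 z.2.
  by move=> Ppi'; case/andP: (dominated Ppi' z).
apply: EFin_inj; rewrite -mix_occupancyE; last exact: is_mixture_cons.
rewrite esum_nat_recl; last by case=> [|n] /=; rewrite -EFinM lee_fin !mulr_ge0 ?d_ge0.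
under eq_esum do rewrite /= EFinM -muleA.
rewrite esum_natZl // => [|n]; last by rewrite -EFinM lee_fin mulr_ge0 ?d_ge0.
by rewrite mix_occupancyE // -!EFinM -EFinD.
Qed.

End mixtures.

Section dominated.
Variables (R : realType) (X A : countType) (M : MDP R X A).
Variables (Pi : set (policy R X A)) (h : nat) (mu : X * A -> R) (C : R).
Hypothesis Pi_neq0 : Pi !=set0.
Hypothesis mu_dist : is_dist mu.
Hypothesis C_ge0 : 0 <= C.
Hypothesis dominated :
  forall pi, Pi pi -> forall z, 0 <= occupancy M pi h z.1 z.2 <= C * mu z.
Implicit Types (w : nat -> R) (q : nat -> policy R X A).

Section potential.
Variable eta : R.
Hypothesis eta_gt0 : 0 < eta.

Definition mix_potential w q : \bar R :=
  \esum_(z in [set: X * A]) (potential eta (mu z) (mix_occupancy M w q h z.1 z.2))%:E.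

Lemma mix_potential_term_ge0 w q z : is_mixture Pi w q ->
  0 <= potential eta (mu z) (mix_occupancy M w q h z.1 z.2).
Proof.
move=> w_mix; apply: potential_ge0; [exact: ltW | exact: mu_dist.1 |].
by case/andP: (mix_occupancy_bound dominated z w_mix).
Qed.

Lemma mix_potential_le w q : is_mixture Pi w q ->
  (mix_potential w q <= (ln (1 + C / eta))%:E)%E.
Proof.
move=> w_mix; have L_ge0 : 0 <= ln (1 + C / eta).
  by rewrite ln_ge0 // lerDl divr_ge0 // ltW.
apply: (le_trans _ (dist_esum_mulr_le (g := fun=> ln (1 + C / eta)) mu_dist _)).
  apply: le_esum => z _; rewrite lee_fin; apply: potential_le => //.
    exact: mu_dist.1.
  by have := mix_occupancy_bound dominated z w_mix.
by move=> z; rewrite L_ge0 lexx.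
Qed.

Lemma exists_near_max_potential (gam : R) : 0 < gam ->
  exists w q phi, [/\ is_mixture Pi w q, mix_potential w q = phi%:E &
    forall w' q', is_mixture Pi w' q' -> (mix_potential w' q' <= (phi + gam)%:E)%E].
Proof.
move=> gam_gt0.
pose S := ereal_sup [set y | exists w q, is_mixture Pi w q /\ y = mix_potential w q].
have S_ub w q : is_mixture Pi w q -> (mix_potential w q <= S)%E.
  by move=> w_mix; apply: ereal_sup_ubound; exists w, q.
have pot_ge0 w q : is_mixture Pi w q -> (0 <= mix_potential w q)%E.
  by move=> w_mix; apply: esum_ge0 => z _; rewrite lee_fin mix_potential_term_ge0.
have S_fin : S \is a fin_num.
  have [pi0 Ppi0] := Pi_neq0; have point := is_mixture_point Ppi0.
  rewrite ge0_fin_numE; last exact: le_trans (pot_ge0 _ _ point) (S_ub _ _ point).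
  apply: (le_lt_trans _ (ltry (ln (1 + C / eta)))).
  by apply: ge_ereal_sup => _ [w [q [w_mix ->]]]; exact: mix_potential_le.
have [_ [w [q [w_mix ->]]] near] := ub_ereal_sup_adherent gam_gt0 S_fin.
have pot_fin : mix_potential w q \is a fin_num.
  by rewrite ge0_fin_numE ?pot_ge0 // (le_lt_trans (mix_potential_le w_mix)) ?ltry.
exists w, q, (fine (mix_potential w q)); split; rewrite ?fineK // => w' q' w'_mix.
apply: (le_trans (S_ub _ _ w'_mix)).
by apply/ltW; rewrite EFinD fineK // -lteBlDr.
Qed.

Variables (w : nat -> R) (q : nat -> policy R X A) (phi gam : R).
Hypothesis w_mix : is_mixture Pi w q.
Hypothesis potential_wq : mix_potential w q = phi%:E.
Hypothesis near_max :
  forall w' q', is_mixture Pi w' q' -> (mix_potential w' q' <= (phi + gam)%:E)%E.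
Hypothesis gam_gt0 : 0 < gam.

Lemma near_max_slope_le pi (t : R) : Pi pi -> 0 < t <= 1 ->
  exists2 A0, finite_set A0 & forall B, finite_set B -> A0 `<=` B ->
    \sum_(z <- fset_set B) mu z *
      ((occupancy M pi h z.1 z.2 - mix_occupancy M w q h z.1 z.2) /
       (t * occupancy M pi h z.1 z.2 + (1 - t) * mix_occupancy M w q h z.1 z.2
        + eta * mu z))
    <= 2 * gam / t.
Proof.
move=> Ppi /andP[t_gt0 t_le1]; have t01 : 0 <= t <= 1 by rewrite ltW.
pose a z := occupancy M pi h z.1 z.2.
pose b z := mix_occupancy M w q h z.1 z.2.
pose b' z := mix_occupancy M (cons_weight t w) (cons_policy pi q) h z.1 z.2.
have b'_mix := is_mixture_cons w_mix Ppi t01.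
have [A0 finA0 potential_approx] := esum_fsum_approx
  (fun z => mix_potential_term_ge0 z w_mix) potential_wq gam_gt0.
exists A0 => // B finB A0B.
have slope_le z : t * (mu z * ((a z - b z) / (t * a z + (1 - t) * b z + eta * mu z)))
    <= potential eta (mu z) (b' z) - potential eta (mu z) (b z).
  have b'E : b' z = t * a z + (1 - t) * b z.
    exact: (mix_occupancy_cons dominated z w_mix Ppi t01).
  have b_ge0 : 0 <= b z by case/andP: (mix_occupancy_bound dominated z w_mix).
  have b'_ge0 : 0 <= b' z by case/andP: (mix_occupancy_bound dominated z b'_mix).
  have -> : t * (mu z * ((a z - b z) / (t * a z + (1 - t) * b z + eta * mu z)))
      = mu z * ((b' z - b z) / (b' z + eta * mu z)) by rewrite b'E; ring.
  exact: potential_increment eta_gt0 (mu_dist.1 z) b_ge0 b'_ge0.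
have new_le : \sum_(z <- fset_set B) potential eta (mu z) (b' z) <= phi + gam.
  have := fsum_le_esum finB (fun z => mix_potential_term_ge0 z b'_mix).
  by rewrite -lee_fin => /le_trans; apply; exact: near_max.
have old_gt := potential_approx B finB A0B.
rewrite ler_pdivlMr // mulr_suml; under eq_bigr do rewrite mulrC.
apply: le_trans (ler_sum _ (fun z _ => slope_le z)) _.
rewrite sumrB; lra.
Qed.

Lemma Psi_le_near_max (t eps : R) : 0 < t -> t <= eps -> t < 1 ->
  (Psi M Pi h eps w q <=
   (C * (1 + t) * (2 * gam / t) + (C * (1 + t) / (1 - t) + eta / (t * eps ^+ 2)))%:E)%E.
Proof.
move=> t_gt0 t_le t_lt1; have eps_gt0 : 0 < eps by exact: lt_le_trans t_le.
apply: ge_ereal_sup => _ [pi [Ppi ->]].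
have [A0 finA0 slope_sum] := near_max_slope_le Ppi (introT andP (conj t_gt0 (ltW t_lt1))).
have a_bnd z : 0 <= occupancy M pi h z.1 z.2 <= C * mu z by exact: dominated.
have b_ge0 z : 0 <= mix_occupancy M w q h z.1 z.2.
  by case/andP: (mix_occupancy_bound dominated z w_mix).
apply: (esum_le_eventually finA0) => [z|B finB A0B].
  have /andP[a_ge0 _] := a_bnd z.
  apply: mulr_ge0 => //; apply: divr_ge0 => //.
  by apply: addr_ge0; [exact: b_ge0 | apply: mulr_ge0 => //; exact: ltW].
apply: le_trans (ler_sum _ (fun z _ => sq_ratio_le_slope (a_bnd z) (b_ge0 z)
  (mu_dist.1 z) C_ge0 t_gt0 t_le t_lt1 eta_gt0)) _.
rewrite big_split /= -mulr_sumr -mulr_sumr.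
have Ct_ge0 : 0 <= C * (1 + t) by rewrite mulr_ge0 //; lra.
have K_ge0 : 0 <= C * (1 + t) / (1 - t) + eta / (t * eps ^+ 2).
  apply: addr_ge0; apply: divr_ge0 => //; first lra; first exact: ltW.
  by rewrite mulr_ge0 ?exprn_ge0 // ltW.
have slope_le := slope_sum B finB A0B.
by rewrite lerD // ?ler_wpM2l // ler_piMr // dist_fsum_le1.
Qed.

End potential.

Lemma Cov_le_dominated (eps : R) : 0 < eps -> (Cov M Pi h eps <= C%:E)%E.
Proof.
move=> eps_gt0; apply/lee_addgt0Pr => delta delta_gt0.
have C1_gt0 : 0 < C + 1 by rewrite ltr_wpDl.
(* With eta = t eps^2 s and gam = t s the error terms of [Psi_le_near_max] become
   2 C (1 + t) s and s. *)
pose t := Num.min eps (Num.min (1 / 2) (delta / (8 * (C + 1)))).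
pose s := delta / (6 * (C + 1)).
have t_gt0 : 0 < t by rewrite !lt_min eps_gt0 !divr_gt0 //; lra.
have t_le_eps : t <= eps by rewrite ge_min lexx.
have t_le_half : t <= 1 / 2 by rewrite !ge_min lexx orbT.
have t_small : 8 * (C + 1) * t <= delta.
  by rewrite mulrC -ler_pdivlMr ?mulr_gt0 // !ge_min lexx !orbT.
have s_gt0 : 0 < s by rewrite divr_gt0 // mulr_gt0.
have s_small : 6 * (C + 1) * s <= delta by rewrite /s mulrC divfK // gt_eqF ?mulr_gt0.
have eta_gt0 : 0 < t * eps ^+ 2 * s.
  by rewrite mulr_gt0 // mulr_gt0 // exprn_gt0.
have gam_gt0 : 0 < t * s by rewrite mulr_gt0.
have [w [q [phi [w_mix pot_eq near_max]]]] :=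
  exists_near_max_potential eta_gt0 gam_gt0.
apply: (le_trans (ereal_inf_lbound _)); first by exists w, q.
have t_lt1 : t < 1 by lra.
apply: (le_trans (Psi_le_near_max eta_gt0 w_mix pot_eq near_max gam_gt0
  t_gt0 t_le_eps t_lt1)).
rewrite lee_fin.
have -> : C * (1 + t) * (2 * (t * s) / t) +
    (C * (1 + t) / (1 - t) + t * eps ^+ 2 * s / (t * eps ^+ 2)) =
    C * (1 + t) / (1 - t) + (2 * C * (1 + t) + 1) * s.
  by field; rewrite !gt_eqF ?exprn_gt0 //=; lra.
exact: perturbation_le (ltW s_gt0) s_small.
Qed.

End dominated.

Unset Implicit Arguments.

Theorem proposition3p2 (R : realType) (X A : countType) (H : nat)
  (M : MDP R X A) (Pi : set (policy R X A))
  (HPi : forall pi, Pi pi -> is_RNS_policy H pi)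
  (HPi0 : Pi !=set0)
  (h : nat) (hh : (1 <= h <= H)%N) (eps : R) (heps : 0 < eps) :
  (Cov M Pi h eps <= Cinf M Pi h)%E.
Proof.
apply: le_ereal_inf_tmp => _ [mu [mu_dist ->]].
have [mu_ge0 _] := mu_dist.
have d_ge0 pi z : Pi pi -> 0 <= occupancy M pi h z.1 z.2.
  by move=> Ppi; apply: occ_ge0 (HPi _ Ppi) _; case: h hh => // h' /andP[].
set Y := ereal_sup _.
have ratio_le pi z : Pi pi -> (eratio (occupancy M pi h z.1 z.2) (mu z) <= Y)%E.
  by move=> Ppi; apply: ereal_sup_ubound; exists pi; split => //; exists z.
have Y_ge0 : (0 <= Y)%E.
  have [pi0 Ppi0] := HPi0; have [z0 _] := dist_neq0 mu_dist.
  exact: le_trans (eratio_ge0 (d_ge0 _ z0 Ppi0) (mu_ge0 z0)) (ratio_le _ _ Ppi0).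
case: Y ratio_le Y_ge0 => [C| |] ratio_le // C_ge0; last by rewrite leey.
apply: (Cov_le_dominated HPi0 mu_dist C_ge0 _ heps) => pi Ppi z.
by rewrite d_ge0 //= (eratio_le (mu_ge0 z) (ratio_le _ _ Ppi)).
Qed.
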